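(* Let $R$ be an NJ-symmetric ring and let $M$ be a maximal left ideal of $R$ which is not essential (as a left ideal). Then $M$ is a two-sided ideal of $R$. Likewise, if $M$ is a maximal right ideal of $R$ which is not essential (as a right ideal), then $M$ is a two-sided ideal of $R$.
   Context: Rings are associative with identity. $N(R)$ is the set of nilpotent elements, $J(R)$ the Jacobson radical. $R$ is NJ-symmetric if for all $a,b,c\in R$, $abc\in N(R)$ implies $bac\in J(R)$. *)

From mathcomp Require Import all_boot all_algebra.
Set Implicit Arguments. Unset Strict Implicit. Unset Printing Implicit Defensive.
Import GRing.Theory.
Local Open Scope ring_scope.

Section RingNotions.
Variable R : nzRingType.

Definition left_ideal (I : R -> Prop) : Prop :=
  [/\ I 0, (forall x y, I x -> I y -> I (x + y)) & (forall r x, I x -> I (r * x))].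

Definition right_ideal (I : R -> Prop) : Prop :=
  [/\ I 0, (forall x y, I x -> I y -> I (x + y)) & (forall r x, I x -> I (x * r))].

Definition two_sided_ideal (I : R -> Prop) : Prop := left_ideal I /\ right_ideal I.

Definition maximal_left_ideal (M : R -> Prop) : Prop :=
  [/\ left_ideal M, ~ M 1 &
      forall J, left_ideal J -> (forall x, M x -> J x) ->
        (forall x, J x -> M x) \/ (forall x, J x)].

Definition maximal_right_ideal (M : R -> Prop) : Prop :=
  [/\ right_ideal M, ~ M 1 &
      forall J, right_ideal J -> (forall x, M x -> J x) ->
        (forall x, J x -> M x) \/ (forall x, J x)].

Definition essential_left_ideal (M : R -> Prop) : Prop :=
  left_ideal M /\
  forall K, left_ideal K -> (exists x, K x /\ x <> 0) ->
    exists x, K x /\ M x /\ x <> 0.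

Definition essential_right_ideal (M : R -> Prop) : Prop :=
  right_ideal M /\
  forall K, right_ideal K -> (exists x, K x /\ x <> 0) ->
    exists x, K x /\ M x /\ x <> 0.

Definition nilpotent_elt (x : R) : Prop := exists n : nat, x ^+ n = 0.

Definition jacobson (x : R) : Prop :=
  forall M, maximal_left_ideal M -> M x.

Definition NJ_symmetric : Prop :=
  forall a b c : R, nilpotent_elt (a * b * c) -> jacobson (b * a * c).

End RingNotions.

From mathcomp Require Import all_boot all_algebra.
From Stdlib Require Import Classical.
Set Implicit Arguments. Unset Strict Implicit.
Import GRing.Theory.
Local Open Scope ring_scope.

(* If M is maximal and not essential, some nonzero one-sided ideal K meets M
   trivially, and M + K = R gives 1 = e + f with e in M and f in K; then f is
   idempotent and M kills f on the appropriate side.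
   For a left ideal M: each e r f squares to zero, so by NJ-symmetry it lies in
   J(R), which is contained in M; hence eR is in M and M = Me is a right ideal.
   For a right ideal M, J(R) is only known to lie in the maximal LEFT ideals, so
   one builds one by hand: fR, a complement of M, is a minimal right ideal, which
   makes {x | fRxf = 0} a maximal left ideal.  It contains the square-zero
   elements e s f, and this forces fRe = 0, whence Rm = eRm lies in M. *)

Section LeftIdeals.
Variable R : nzRingType.
Implicit Types (M K : R -> Prop) (x : R).

Lemma nonessential_left_ideal_complement M : left_ideal M -> ~ essential_left_ideal M ->
  exists K, [/\ left_ideal K, (exists x, K x /\ x <> 0)
              & forall x, K x -> M x -> x = 0].
Proof.
move=> idM notE; apply: NNPP => noK; apply: notE; split=> // K idK [k [Kk k_neq0]].
apply: NNPP => noMK; apply: noK; exists K; split=> //; first by exists k.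
by move=> x Kx Mx; apply: NNPP => x_neq0; apply: noMK; exists x.
Qed.

Definition ideal_add M K x := exists m k, [/\ M m, K k & x = m + k].

Lemma left_ideal_add M K : left_ideal M -> left_ideal K -> left_ideal (ideal_add M K).
Proof.
case=> M0 MD MM [K0 KD KM]; split.
- by exists 0, 0; rewrite addr0.
- move=> _ _ [m1 [k1 [Mm1 Kk1 ->]]] [m2 [k2 [Mm2 Kk2 ->]]].
  by exists (m1 + m2), (k1 + k2); rewrite addrACA; split; auto.
- move=> r _ [m [k [Mm Kk ->]]].
  by exists (r * m), (r * k); rewrite mulrDr; split; auto.
Qed.

Lemma maximal_left_ideal_add1 M K : maximal_left_ideal M -> left_ideal K ->
  ~ (forall x, K x -> M x) -> exists m k, [/\ M m, K k & m + k = 1].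
Proof.
case=> idM _ maxM idK notKM.
case: (maxM _ (left_ideal_add idM idK)) => [x Mx | subM | all].
- by exists x, 0; split=> //; [case: idK | rewrite addr0].
- by case: notKM => x Kx; apply: subM; exists 0, x; split=> //; [case: idM | rewrite add0r].
- by have [m [k [Mm Kk mk1]]] := all 1; exists m, k.
Qed.

Lemma nonessential_maximal_left_ideal_split M :
  maximal_left_ideal M -> ~ essential_left_ideal M ->
  exists e f, [/\ M e, e + f = 1, f * e = 0 & forall m, M m -> m * f = 0].
Proof.
move=> maxM notE; have [idM _ _] := maxM.
have [K [idK [k [Kk k_neq0]] KM0]] := nonessential_left_ideal_complement idM notE.
have [|e [f [Me Kf ef1]]] := maximal_left_ideal_add1 maxM idK.
  by move=> KsubM; apply: k_neq0; apply: KM0 => //; apply: KsubM.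
have [_ MD MM] := idM; have [_ KD KM] := idK.
exists e, f; split=> //.
  apply: KM0; last exact: MM.
  have ->: e = 1 - f by rewrite -ef1 addrK.
  by rewrite mulrBr mulr1; apply: KD => //; rewrite -mulNr; apply: KM.
move=> m Mm; apply: KM0; first exact: KM.
have ->: f = 1 - e by rewrite -ef1 addrAC subrr add0r.
rewrite mulrBr mulr1.
by apply: MD => //; rewrite -mulNr; apply: MM.
Qed.

End LeftIdeals.

Section RightIdeals.
Variable R : nzRingType.
Implicit Types (M K : R -> Prop) (f r t x : R).

Lemma maximal_right_ideal_add1 M K : maximal_right_ideal M -> right_ideal K ->
  ~ (forall x, K x -> M x) -> exists m k, [/\ M m, K k & m + k = 1].
Proof. exact: (@maximal_left_ideal_add1 R^c). Qed.

Lemma nonessential_maximal_right_ideal_split M :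
  maximal_right_ideal M -> ~ essential_right_ideal M ->
  exists e f, [/\ M e, e + f = 1, e * f = 0 & forall m, M m -> f * m = 0].
Proof. exact: (@nonessential_maximal_left_ideal_split R^c). Qed.

Lemma right_ideal_mulr t : right_ideal (fun x => exists s, x = t * s).
Proof.
split=> [|_ _ [s1 ->] [s2 ->]|r _ [s ->]]; first by exists 0; rewrite mulr0.
- by exists (s1 + s2); rewrite mulrDr.
- by exists (s * r); rewrite mulrA.
Qed.

Lemma sqr0_nilpotent x : x * x = 0 -> nilpotent_elt x.
Proof. by exists 2%N; rewrite expr2. Qed.

Definition minimal_right_ideal_gen f :=
  forall t, f * t = t -> t <> 0 -> exists s, t * s = f.

Lemma minimal_corner_left_inverse f t : f * f = f -> minimal_right_ideal_gen f ->
  f * t = t -> t * f = t -> t <> 0 -> exists w, w * t = f.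
Proof.
move=> ff minf ft tf t_neq0; have [s ts] := minf t ft t_neq0.
pose w := f * s * f.
have tw : t * w = f by rewrite /w !mulrA tf ts ff.
have fw : f * w = w by rewrite /w !mulrA ff.
have wf : w * f = w by rewrite /w -mulrA ff.
have w_neq0 : w <> 0.
  by move=> w0; apply: t_neq0; rewrite -tf -tw w0 !mulr0.
have [s' ws'] := minf w fw w_neq0.
have t_def : t = f * s' by rewrite -{1}tf -{1}ws' mulrA tw.
by exists w; rewrite t_def mulrA wf ws'.
Qed.

Definition corner_annihilator f x := forall r, f * r * x * f = 0.

Lemma maximal_left_ideal_corner_annihilator f : f * f = f -> f <> 0 ->
  minimal_right_ideal_gen f -> maximal_left_ideal (corner_annihilator f).
Proof.
move=> ff f_neq0 minf; split.
- split=> [r|x y Lx Ly r|s x Lx r]; first by rewrite mulr0 mul0r.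
  + by rewrite mulrDr mulrDl Lx Ly addr0.
  + by rewrite !mulrA -(mulrA f) Lx.
- by move=> L1; apply: f_neq0; have := L1 1; rewrite !mulr1 ff.
move=> J [_ JD JM] LJ.
case: (classic (forall x, J x -> corner_annihilator f x)) => [|notLJ]; [by left | right].
have [x notJL] := not_all_ex_not _ _ notLJ.
have [Jx notLx] := imply_to_and _ _ notJL.
have [r t_neq0] := not_all_ex_not _ _ notLx.
have L1f : corner_annihilator f (1 - f).
  by move=> s; rewrite -mulrA mulrBl mul1r ff subrr mulr0.
have Jxf : J (x * f).
  have ->: x * f = x - x * (1 - f) by rewrite mulrBr mulr1 opprB addrCA subrr addr0.
  by apply: JD => //; rewrite -mulNr; apply: JM; apply: LJ.
have Jt : J (f * r * x * f) by rewrite -mulrA; apply: JM.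
have ft : f * (f * r * x * f) = f * r * x * f by rewrite !mulrA ff.
have tf : f * r * x * f * f = f * r * x * f by rewrite -mulrA ff.
have [w wt] := minimal_corner_left_inverse ff minf ft tf t_neq0.
have Jf : J f by rewrite -wt; apply: JM.
move=> z; rewrite -[z]mulr1 -(subrK f 1); apply: JM.
by apply: JD => //; apply: LJ.
Qed.

End RightIdeals.

Section NJSymmetric.
Variable R : nzRingType.
Hypothesis NJ : NJ_symmetric R.
Implicit Types (M : R -> Prop) (e f x : R).

Lemma nilpotent_jacobson x : nilpotent_elt x -> jacobson x.
Proof. by move: (@NJ 1 1 x); rewrite !mul1r. Qed.

(* The square-zero element e s f lies in J(R), hence in the maximal left ideal
   {x | fRxf = 0}; if (f r e) s = f this gives f = f r (e s f) f = 0. *)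
Lemma minimal_corner_orthogonal f e : f * f = f -> f <> 0 ->
  minimal_right_ideal_gen f -> f * e = 0 -> forall r, f * r * e = 0.
Proof.
move=> ff f_neq0 minf fe0 r; have [//|/eqP t_neq0] := eqVneq (f * r * e) 0.
have ft : f * (f * r * e) = f * r * e by rewrite !mulrA ff.
have [s ts] := minf _ ft t_neq0.
have maxL := maximal_left_ideal_corner_annihilator ff f_neq0 minf.
have Lu : corner_annihilator f (e * s * f).
  apply: nilpotent_jacobson maxL; apply: sqr0_nilpotent.
  by rewrite !mulrA -(mulrA _ f e) fe0 mulr0 !mul0r.
by case: f_neq0; have := Lu r; rewrite !mulrA ts !ff.
Qed.

Lemma right_ideal_of_split_maximal_left_ideal M e f : maximal_left_ideal M ->
  M e -> e + f = 1 -> f * e = 0 -> (forall m, M m -> m * f = 0) -> right_ideal M.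
Proof.
move=> maxM Me ef1 fe0 Mf0; have [[M0 MD MM] _ _] := maxM.
have eR : forall r, M (e * r).
  move=> r; have ->: e * r = e * r * e + e * r * f by rewrite -mulrDr ef1 mulr1.
  apply: MD; first exact: MM.
  apply: nilpotent_jacobson maxM; apply: sqr0_nilpotent.
  by rewrite !mulrA -(mulrA _ f e) fe0 mulr0 !mul0r.
split=> // r m Mm.
have me : m * e = m by rewrite -{2}[m]mulr1 -ef1 mulrDr Mf0 // addr0.
by rewrite -me -mulrA; apply: MM.
Qed.

Lemma left_ideal_of_split_maximal_right_ideal M e f : maximal_right_ideal M ->
  M e -> e + f = 1 -> (forall m, M m -> f * m = 0) -> left_ideal M.
Proof.
move=> maxM Me ef1 fM0; have [[M0 MD MM] M1 _] := maxM.
have fe0 : f * e = 0 := fM0 e Me.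
have ff : f * f = f by rewrite -{3}[f]mulr1 -ef1 mulrDr fe0 add0r.
have f_neq0 : f <> 0 by move=> f0; apply: M1; rewrite -ef1 f0 addr0.
have minf : minimal_right_ideal_gen f.
  move=> t ft t_neq0.
  have [|m [_ [Mm [s ->] mts1]]] := maximal_right_ideal_add1 maxM (right_ideal_mulr t).
    by move=> tM; apply: t_neq0; rewrite -ft fM0 //; apply: tM; exists 1; rewrite mulr1.
  by exists s; rewrite -[f]mulr1 -mts1 mulrDr fM0 // add0r mulrA ft.
have fRe0 := minimal_corner_orthogonal ff f_neq0 minf fe0.
split=> // r m Mm.
have em : e * m = m by rewrite -{2}[m]mul1r -ef1 mulrDl fM0 // addr0.
have frm0 : f * (r * m) = 0 by rewrite -em !mulrA fRe0 mul0r.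
by rewrite -[r * m]mul1r -ef1 mulrDl frm0 addr0; apply: MM.
Qed.

End NJSymmetric.

Theorem lemma2p7 (R : nzRingType) (hNJ : NJ_symmetric R) :
  (forall M : R -> Prop, maximal_left_ideal M -> ~ essential_left_ideal M ->
     two_sided_ideal M) /\
  (forall M : R -> Prop, maximal_right_ideal M -> ~ essential_right_ideal M ->
     two_sided_ideal M).
Proof.
split=> M maxM notE.
- have [e [f [Me ef1 fe0 Mf0]]] := nonessential_maximal_left_ideal_split maxM notE.
  split; first by case: maxM.
  exact: (right_ideal_of_split_maximal_left_ideal hNJ maxM Me ef1 fe0 Mf0).
- have [e [f [Me ef1 _ fM0]]] := nonessential_maximal_right_ideal_split maxM notE.
  split; last by case: maxM.
  exact: (left_ideal_of_split_maximal_right_ideal hNJ maxM Me ef1 fM0).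
Qed.
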